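(* Let $n_j:=2^{2^j}$ and $t_n:=1/n$. For $j\ge100$, $f_{n_j}(t_{n_j})=0$ and $B_{n_j}(f_{n_j},t_{n_j})\ge\frac{\ln n_j}{16\,n_j}$.
   Context: Nodes: $x_{k,n}:=2k/n-1$, $k=0,\dots,n$. $B_n(f,x):=N_n(f,x)/D_n(x)$ for $x$ not a node, $B_n(f,x_{k,n}):=f(x_{k,n})$, with $N_n(f,x)=\sum_{k=0}^n(-1)^k\frac{f(x_{k,n})}{x-x_{k,n}}$, $D_n(x)=\sum_{k=0}^n(-1)^k\frac{1}{x-x_{k,n}}$. For $m$ such that $\sqrt m$ is an integer multiple of $4$, define $f_m:\mathbb{R}\to\mathbb{R}$ by: $f_m(x)=0$ for $x<1/m$ or $x\ge(\sqrt m-3)/m$; $f_m(x)=x-1/m$ for $1/m\le x<2/m$; $f_m(x)=\frac{4p+3}{m}-x$ for $0\le p\le\frac{\sqrt m-8}{4}$ and $\frac{4p+2}{m}\le x<\frac{4p+4}{m}$; $f_m(x)=x-\frac{4p+1}{m}$ for $1\le p\le\frac{\sqrt m-8}{4}$ and $\frac{4p}{m}\le x<\frac{4p+2}{m}$; $f_m(x)=x-\frac{\sqrt m-3}{m}$ for $\frac{\sqrt m-4}{m}\le x<\frac{\sqrt m-3}{m}$. *)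

From Stdlib Require Import Reals Lra Classical ClassicalEpsilon.
Open Scope R_scope.

Definition node (n k : nat) : R := 2 * INR k / INR n - 1.

Definition Nn (n : nat) (f : R -> R) (x : R) : R :=
  sum_f_R0 (fun k => (-1) ^ k * f (node n k) / (x - node n k)) n.

Definition Dn (n : nat) (x : R) : R :=
  sum_f_R0 (fun k => (-1) ^ k / (x - node n k)) n.

Definition is_node (n : nat) (x : R) : Prop :=
  exists k : nat, (k <= n)%nat /\ x = node n k.

Definition B (n : nat) (f : R -> R) (x : R) : R :=
  match excluded_middle_informative (is_node n x) with
  | left H => f (node n (proj1_sig (constructive_indefinite_description _ H)))
  | right _ => Nn n f x / Dn n x
  end.

Definition desc_piece (m : nat) (x : R) (p : nat) : Prop :=
  INR p <= (sqrt (INR m) - 8) / 4 /\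
  (4 * INR p + 2) / INR m <= x < (4 * INR p + 4) / INR m.

Definition asc_piece (m : nat) (x : R) (p : nat) : Prop :=
  (1 <= p)%nat /\ INR p <= (sqrt (INR m) - 8) / 4 /\
  (4 * INR p) / INR m <= x < (4 * INR p + 2) / INR m.

(* The function f_m of the paper (meant for m with sqrt m a multiple of 4). *)
Definition fm (m : nat) (x : R) : R :=
  let M := INR m in
  let s := sqrt M in
  if Rlt_dec x (1 / M) then 0
  else if Rle_dec ((s - 3) / M) x then 0
  else if Rlt_dec x (2 / M) then x - 1 / M
  else if Rle_dec ((s - 4) / M) x then x - (s - 3) / M
  else match excluded_middle_informative (exists p, desc_piece m x p) with
       | left H =>
           let p := proj1_sig (constructive_indefinite_description _ H) in
           (4 * INR p + 3) / M - x
       | right _ =>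
         match excluded_middle_informative (exists p, asc_piece m x p) with
         | left H =>
             let p := proj1_sig (constructive_indefinite_description _ H) in
             x - (4 * INR p + 1) / M
         | right _ => 0
         end
       end.

From Stdlib Require Import Reals Lra Lia ClassicalEpsilon.
Open Scope R_scope.

(* Write 2^(2^j) = m = 16 a^2 with a = 2^(2^(j-1) - 2), so sqrt m = 4a, and take x = 1/m.
   The nodes x_k with k <= m/2 are <= 0, where f_m vanishes.  The node x_{m/2+1+i} = 2(i+1)/m
   is a peak or trough of the sawtooth f_m, of value (-1)^i/m for i < 2a - 2; f_m vanishes beyond.
   The sign (-1)^k = -(-1)^i and x - x_k = -(2i+1)/m cancel that sign, so
   N_m(f_m, 1/m) = sum_{i < 2a-2} 1/(2i+1) >= ln(2a - 1)/2.  The denominator D_m(1/m) splits into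
   two alternating sums with monotone terms, of values in [0, m] and [2m/3, m].  Hence
   B_m(f_m, 1/m) >= ln(2a - 1)/(4m), and m <= (2a - 1)^4 gives the bound ln m/(16 m). *)

Lemma neg1_pow_cases n : (-1) ^ n = 1 \/ (-1) ^ n = -1.
Proof.
  destruct (Nat.Even_or_Odd n) as [[p ->] | [p ->]].
  - left; apply pow_1_even.
  - right; rewrite Nat.add_1_r; apply pow_1_odd.
Qed.

Lemma tg_alt_sum_increasing_bounds (u : nat -> R) n :
  0 <= u 0%nat -> (forall k, (k < n)%nat -> u k <= u (S k)) ->
  0 <= (-1) ^ n * sum_f_R0 (tg_alt u) n <= u n.
Proof.
  induction n as [|n IH]; intros Hu0 Hinc.
  - unfold tg_alt; simpl; lra.
  - assert (IHn := IH Hu0 (fun k Hk => Hinc k (Nat.lt_lt_succ_r _ _ Hk))).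
    assert (Hn := Hinc n (Nat.lt_succ_diag_r n)).
    cbn [sum_f_R0]; unfold tg_alt in *; cbn [pow].
    destruct (neg1_pow_cases n) as [E | E]; rewrite E in *; lra.
Qed.

Lemma tg_alt_sum_decreasing_bounds (u : nat -> R) n :
  (forall k, 0 <= u (S k) <= u k) ->
  u 0%nat - u 1%nat <= sum_f_R0 (tg_alt u) n <= u 0%nat.
Proof.
  intros Hdec.
  (* Each partial sum lies between the two preceding ones. *)
  enough (H : u 0%nat - u 1%nat <= sum_f_R0 (tg_alt u) n <= u 0%nat /\
               u 0%nat - u 1%nat <= sum_f_R0 (tg_alt u) (S n) <= u 0%nat)
    by apply H.
  induction n as [|n IH].
  - pose proof (Hdec 0%nat); unfold tg_alt; simpl; lra.
  - split; [apply IH|]; revert IH.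
    cbn [sum_f_R0]; unfold tg_alt; cbn [pow].
    pose proof (Hdec (S n)).
    destruct (neg1_pow_cases n) as [E | E]; rewrite E; lra.
Qed.

Lemma ln_le x y : 0 < x -> x <= y -> ln x <= ln y.
Proof.
  intros Hx [Hlt | ->]; [left; apply ln_increasing|]; auto; lra.
Qed.

Lemma ln_succ_sub_le x : 0 < x -> ln (x + 1) - ln x <= / x.
Proof.
  intros Hx.
  assert (Hexp : x + 1 <= x * exp (/ x)).
  { pose proof (exp_ineq1_le (/ x)).
    replace (x + 1) with (x * (1 + / x)) by (field; lra).
    apply Rmult_le_compat_l; lra. }
  apply ln_le in Hexp; [|lra].
  rewrite ln_mult, ln_exp in Hexp by (try apply exp_pos; lra).
  lra.
Qed.

Lemma sum_inv_odd_ge_half_ln n :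
  1 / 2 * ln (INR n + 2) <= sum_f_R0 (fun i => / (2 * INR i + 1)) n.
Proof.
  induction n as [|n IH].
  - pose proof (ln_succ_sub_le 1 ltac:(lra)) as Hln2.
    rewrite ln_1 in Hln2; simpl.
    replace (0 + 2) with (1 + 1) by lra; lra.
  - cbn [sum_f_R0]; rewrite S_INR.
    pose proof (pos_INR n).
    pose proof (ln_succ_sub_le (INR n + 2) ltac:(lra)) as Hln.
    assert (Hterm : / 2 * / (INR n + 2) <= / (2 * (INR n + 1) + 1)).
    { rewrite <- Rinv_mult; apply Rinv_le_contravar; lra. }
    replace (INR n + 1 + 2) with (INR n + 2 + 1) by ring; lra.
Qed.

Lemma Rdiv_le_div_r_iff c x y : 0 < c -> (x / c <= y / c <-> x <= y).
Proof.
  intros Hc; unfold Rdiv; pose proof (Rinv_0_lt_compat c Hc) as Hinv; split; intros H.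
  - apply Rmult_le_reg_r with (/ c); auto.
  - apply Rmult_le_compat_r; lra.
Qed.

Lemma Rdiv_lt_div_r_iff c x y : 0 < c -> (x / c < y / c <-> x < y).
Proof.
  intros Hc; unfold Rdiv; pose proof (Rinv_0_lt_compat c Hc) as Hinv; split; intros H.
  - apply Rmult_lt_reg_r with (/ c); auto.
  - apply Rmult_lt_compat_r; lra.
Qed.

Lemma INR_lt_succ_le p q : INR p < INR q + 1 -> (p <= q)%nat.
Proof. intros H; apply Nat.lt_succ_r, INR_lt; rewrite S_INR; exact H. Qed.

Section Pieces.

Variable m : nat.
Hypothesis m_pos : 0 < INR m.

Lemma desc_piece_unique x p q : desc_piece m x p -> desc_piece m x q -> p = q.
Proof.
  intros [_ [Hp1 Hp2]] [_ [Hq1 Hq2]].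
  assert (Hpq : 4 * INR p + 2 < 4 * INR q + 4) by (apply (Rdiv_lt_div_r_iff (INR m)); lra).
  assert (Hqp : 4 * INR q + 2 < 4 * INR p + 4) by (apply (Rdiv_lt_div_r_iff (INR m)); lra).
  apply Nat.le_antisymm; apply INR_lt_succ_le; lra.
Qed.

Lemma asc_piece_unique x p q : asc_piece m x p -> asc_piece m x q -> p = q.
Proof.
  intros [_ [_ [Hp1 Hp2]]] [_ [_ [Hq1 Hq2]]].
  assert (Hpq : 4 * INR p < 4 * INR q + 2) by (apply (Rdiv_lt_div_r_iff (INR m)); lra).
  assert (Hqp : 4 * INR q < 4 * INR p + 2) by (apply (Rdiv_lt_div_r_iff (INR m)); lra).
  apply Nat.le_antisymm; apply INR_lt_succ_le; lra.
Qed.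

Lemma asc_desc_piece_disjoint x p q : asc_piece m x p -> ~ desc_piece m x q.
Proof.
  intros [_ [_ [Hp1 Hp2]]] [_ [Hq1 Hq2]].
  assert (Hpq : 4 * INR p < 4 * INR q + 4) by (apply (Rdiv_lt_div_r_iff (INR m)); lra).
  assert (Hqp : 4 * INR q + 2 < 4 * INR p + 2) by (apply (Rdiv_lt_div_r_iff (INR m)); lra).
  assert (p <= q)%nat by (apply INR_lt_succ_le; lra).
  assert (q < p)%nat by (apply INR_lt; lra).
  lia.
Qed.

Lemma fm_below_first_ramp x : x < 1 / INR m -> fm m x = 0.
Proof.
  intros Hx; unfold fm; cbv zeta.
  destruct (Rlt_dec _ _); [reflexivity | contradiction].
Qed.

Lemma fm_first_ramp x :
  1 / INR m <= x < 2 / INR m -> x < (sqrt (INR m) - 3) / INR m ->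
  fm m x = x - 1 / INR m.
Proof.
  intros [Hlo Hhi] Hs; unfold fm; cbv zeta.
  destruct (Rlt_dec _ _); [lra|].
  destruct (Rle_dec _ _); [lra|].
  destruct (Rlt_dec _ _); [reflexivity | contradiction].
Qed.

Lemma fm_last_ramp x :
  2 / INR m <= x -> (sqrt (INR m) - 4) / INR m <= x < (sqrt (INR m) - 3) / INR m ->
  fm m x = x - (sqrt (INR m) - 3) / INR m.
Proof.
  intros H2 [Hlo Hhi]; unfold fm; cbv zeta.
  assert (1 / INR m < 2 / INR m) by (apply Rdiv_lt_div_r_iff; lra).
  destruct (Rlt_dec _ _); [lra|].
  destruct (Rle_dec _ _); [lra|].
  destruct (Rlt_dec _ _); [lra|].
  destruct (Rle_dec _ _); [reflexivity | contradiction].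
Qed.

Lemma fm_beyond_last_ramp x : (sqrt (INR m) - 3) / INR m <= x -> fm m x = 0.
Proof.
  intros Hx; unfold fm; cbv zeta.
  destruct (Rlt_dec _ _); [reflexivity|].
  destruct (Rle_dec _ _); [reflexivity | contradiction].
Qed.

Lemma fm_middle_cases x :
  2 / INR m <= x < (sqrt (INR m) - 4) / INR m ->
  fm m x =
    match excluded_middle_informative (exists p, desc_piece m x p) with
    | left H =>
        (4 * INR (proj1_sig (constructive_indefinite_description _ H)) + 3) / INR m - x
    | right _ =>
        match excluded_middle_informative (exists p, asc_piece m x p) with
        | left H =>
            x - (4 * INR (proj1_sig (constructive_indefinite_description _ H)) + 1) / INR m
        | right _ => 0
        end
    end.
Proof.
  intros [Hlo Hhi]; unfold fm; cbv zeta.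
  assert (1 / INR m < 2 / INR m) by (apply Rdiv_lt_div_r_iff; lra).
  assert ((sqrt (INR m) - 4) / INR m < (sqrt (INR m) - 3) / INR m)
    by (apply Rdiv_lt_div_r_iff; lra).
  destruct (Rlt_dec _ _); [lra|].
  destruct (Rle_dec _ _); [lra|].
  destruct (Rlt_dec _ _); [lra|].
  destruct (Rle_dec _ _); [lra | reflexivity].
Qed.

Lemma fm_desc_piece x p :
  2 / INR m <= x < (sqrt (INR m) - 4) / INR m -> desc_piece m x p ->
  fm m x = (4 * INR p + 3) / INR m - x.
Proof.
  intros Hx Hp; rewrite (fm_middle_cases x Hx).
  destruct (excluded_middle_informative _) as [H | H]; [|exfalso; eauto].
  destruct (constructive_indefinite_description _ H) as [q Hq]; simpl.
  rewrite (desc_piece_unique x q p Hq Hp); reflexivity.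
Qed.

Lemma fm_asc_piece x p :
  2 / INR m <= x < (sqrt (INR m) - 4) / INR m -> asc_piece m x p ->
  fm m x = x - (4 * INR p + 1) / INR m.
Proof.
  intros Hx Hp; rewrite (fm_middle_cases x Hx).
  destruct (excluded_middle_informative _) as [[q Hq] | _].
  { exfalso; exact (asc_desc_piece_disjoint x p q Hp Hq). }
  destruct (excluded_middle_informative _) as [H | H]; [|exfalso; eauto].
  destruct (constructive_indefinite_description _ H) as [q Hq]; simpl.
  rewrite (asc_piece_unique x q p Hq Hp); reflexivity.
Qed.

End Pieces.

Section Square.

Variable a : nat.
Hypothesis a_ge2 : (2 <= a)%nat.

Local Notation m := (16 * a * a)%nat.
Local Notation M := (INR m).

Let a_ge2_R : 2 <= INR a.
Proof. apply le_INR in a_ge2; simpl in a_ge2; lra. Qed.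

Lemma INR_16_sq : M = 16 * INR a * INR a.
Proof. rewrite !mult_INR; simpl; ring. Qed.

Lemma INR_half : INR (8 * a * a) = M / 2.
Proof. rewrite INR_16_sq, !mult_INR; simpl; field. Qed.

Lemma INR_16_sq_pos : 0 < M.
Proof. rewrite INR_16_sq; nra. Qed.

Lemma sqrt_INR_16_sq : sqrt M = 4 * INR a.
Proof.
  rewrite INR_16_sq.
  replace (16 * INR a * INR a) with ((4 * INR a) * (4 * INR a)) by ring.
  apply sqrt_square; lra.
Qed.

Lemma node_lower_half_nonpos k : (k <= 8 * a * a)%nat -> node m k <= 0.
Proof.
  intros Hk; apply le_INR in Hk; rewrite INR_half in Hk.
  pose proof INR_16_sq_pos as HM.
  assert (H : 2 * INR k / M <= M / M) by (apply Rdiv_le_div_r_iff; lra).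
  rewrite Rdiv_diag in H by lra.
  unfold node; lra.
Qed.

Lemma node_upper_half i : node m (S (8 * a * a) + i) = 2 * INR (S i) / M.
Proof.
  unfold node; rewrite INR_16_sq, plus_INR, !S_INR, !mult_INR; simpl.
  field; nra.
Qed.

Lemma fm_node_odd p : (p + 2 <= a)%nat -> fm m (2 * INR (2 * p + 1) / M) = 1 / M.
Proof.
  intros Hp; apply le_INR in Hp; rewrite plus_INR in Hp; simpl in Hp.
  pose proof INR_16_sq_pos as HM.
  assert (Hx : 2 * INR (2 * p + 1) = 4 * INR p + 2)
    by (rewrite plus_INR, mult_INR; simpl; ring).
  rewrite (fm_desc_piece m HM _ p); rewrite ?sqrt_INR_16_sq, Hx.
  - field; lra.
  - split; apply Rdiv_le_div_r_iff || apply Rdiv_lt_div_r_iff; auto;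
      pose proof (pos_INR p); lra.
  - unfold desc_piece; rewrite sqrt_INR_16_sq.
    repeat split; [lra| apply Rdiv_le_div_r_iff | apply Rdiv_lt_div_r_iff]; auto; lra.
Qed.

Lemma fm_node_even p :
  (1 <= p)%nat -> (p + 2 <= a)%nat -> fm m (2 * INR (2 * p) / M) = - 1 / M.
Proof.
  intros Hp1 Hp2; apply le_INR in Hp1, Hp2; rewrite plus_INR in Hp2; simpl in Hp1, Hp2.
  pose proof INR_16_sq_pos as HM.
  assert (Hx : 2 * INR (2 * p) = 4 * INR p) by (rewrite mult_INR; simpl; ring).
  rewrite (fm_asc_piece m HM _ p); rewrite ?sqrt_INR_16_sq, Hx.
  - field; lra.
  - split; apply Rdiv_le_div_r_iff || apply Rdiv_lt_div_r_iff; auto; lra.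
  - unfold asc_piece; rewrite sqrt_INR_16_sq.
    repeat split; [apply INR_le; simpl; lra | lra
                  | apply Rdiv_le_div_r_iff | apply Rdiv_lt_div_r_iff]; auto; lra.
Qed.

Lemma fm_node_last : fm m (2 * INR (2 * (a - 1)) / M) = - 1 / M.
Proof.
  pose proof INR_16_sq_pos as HM.
  assert (Hx : 2 * INR (2 * (a - 1)) = 4 * INR a - 4)
    by (rewrite mult_INR, minus_INR by lia; simpl; ring).
  rewrite (fm_last_ramp m HM); rewrite ?sqrt_INR_16_sq, Hx.
  - field; lra.
  - apply Rdiv_le_div_r_iff; auto; lra.
  - split; [apply Rdiv_le_div_r_iff | apply Rdiv_lt_div_r_iff]; auto; lra.
Qed.

Lemma fm_node j :
  (1 <= j)%nat -> (j + 2 <= 2 * a)%nat -> fm m (2 * INR j / M) = (-1) ^ S j / M.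
Proof.
  intros Hj1 Hj2.
  destruct (Nat.Even_or_Odd j) as [[p ->] | [p ->]].
  - rewrite pow_1_odd.
    destruct (Nat.le_gt_cases (p + 2) a).
    + apply fm_node_even; lia.
    + replace p with (a - 1)%nat by lia; apply fm_node_last.
  - replace (S (2 * p + 1)) with (2 * S p)%nat by lia; rewrite pow_1_even.
    apply fm_node_odd; lia.
Qed.

Lemma fm_node_tail j : (2 * a <= j + 1)%nat -> fm m (2 * INR j / M) = 0.
Proof.
  intros Hj; apply le_INR in Hj; rewrite mult_INR, plus_INR in Hj; simpl in Hj.
  apply fm_beyond_last_ramp; rewrite sqrt_INR_16_sq.
  apply Rdiv_le_div_r_iff; [apply INR_16_sq_pos | lra].
Qed.

Lemma fm_at_inv : fm m (1 / M) = 0.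
Proof.
  pose proof INR_16_sq_pos as HM.
  rewrite fm_first_ramp; [lra | split; [lra|] |];
    [apply Rdiv_lt_div_r_iff | rewrite sqrt_INR_16_sq; apply Rdiv_lt_div_r_iff]; auto; lra.
Qed.

Lemma neg1_pow_upper_half i : (-1) ^ (S (8 * a * a) + i) = - (-1) ^ i.
Proof.
  replace (S (8 * a * a)) with (S (2 * (4 * a * a))) by lia.
  rewrite pow_add, pow_1_odd; ring.
Qed.

Lemma Dn_lower_half_bounds :
  0 <= sum_f_R0 (fun k => (-1) ^ k / (1 / M - node m k)) (8 * a * a) <= M.
Proof.
  pose proof INR_16_sq_pos as HM.
  rewrite (sum_eq _ (tg_alt (fun k => M / (M + 1 - 2 * INR k)))).
  2:{ intros k Hk; apply le_INR in Hk; rewrite INR_half in Hk.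
      unfold tg_alt, node; field; lra. }
  destruct (tg_alt_sum_increasing_bounds (fun k => M / (M + 1 - 2 * INR k)) (8 * a * a))
    as [Hlo Hhi].
  { cbv beta; rewrite INR_0; apply Rlt_le, Rdiv_lt_0_compat; lra. }
  { intros k Hk; apply le_INR in Hk; rewrite S_INR, INR_half in Hk; rewrite S_INR.
    pose proof (pos_INR k).
    apply Rmult_le_compat_l; [lra|]; apply Rinv_le_contravar; lra. }
  assert (Heven : (-1) ^ (8 * a * a) = 1).
  { replace (8 * a * a)%nat with (2 * (4 * a * a))%nat by lia; apply pow_1_even. }
  rewrite Heven, Rmult_1_l in Hlo, Hhi; cbv beta in Hhi; rewrite INR_half in Hhi.
  replace (M / (M + 1 - 2 * (M / 2))) with M in Hhi by (field; lra).
  lra.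
Qed.

Lemma Dn_upper_half_bounds :
  0 < sum_f_R0 (fun i => (-1) ^ (S (8 * a * a) + i) / (1 / M - node m (S (8 * a * a) + i)))
        (m - S (8 * a * a)) <= M.
Proof.
  pose proof INR_16_sq_pos as HM.
  rewrite (sum_eq _ (tg_alt (fun i => M / (2 * INR i + 1)))).
  2:{ intros i _; rewrite node_upper_half, S_INR, neg1_pow_upper_half; unfold tg_alt.
      pose proof (pos_INR i); field; lra. }
  destruct (tg_alt_sum_decreasing_bounds (fun i => M / (2 * INR i + 1)) (m - S (8 * a * a)))
    as [Hlo Hhi].
  { intros i; rewrite S_INR; pose proof (pos_INR i); split.
    - apply Rlt_le, Rdiv_lt_0_compat; lra.
    - apply Rmult_le_compat_l; [lra|]; apply Rinv_le_contravar; lra. }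
  cbv beta in Hlo, Hhi; rewrite INR_0 in Hlo, Hhi; rewrite INR_1 in Hlo.
  replace (M / (2 * 0 + 1)) with M in Hlo, Hhi by field.
  replace (M / (2 * 1 + 1)) with (M / 3) in Hlo by field.
  lra.
Qed.

Lemma Dn_at_inv_bounds : 0 < Dn m (1 / M) <= 2 * M.
Proof.
  unfold Dn; rewrite (tech2 _ (8 * a * a) m) by nia.
  pose proof Dn_lower_half_bounds; pose proof Dn_upper_half_bounds; lra.
Qed.

Lemma Nn_fm_at_inv :
  Nn m (fm m) (1 / M) = sum_f_R0 (fun i => / (2 * INR i + 1)) (2 * a - 3).
Proof.
  pose proof INR_16_sq_pos as HM.
  unfold Nn; rewrite (tech2 _ (8 * a * a) m) by nia.
  rewrite (sum_eq _ (fun _ => 0) (8 * a * a)).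
  2:{ intros k Hk; rewrite fm_below_first_ramp; [unfold Rdiv; ring|].
      pose proof (node_lower_half_nonpos k Hk).
      assert (0 < 1 / M) by (apply Rdiv_lt_0_compat; lra); lra. }
  rewrite sum_cte, Rmult_0_l, Rplus_0_l.
  rewrite (tech2 _ (2 * a - 3) (m - S (8 * a * a))) by nia.
  rewrite (sum_eq _ (fun i => / (2 * INR i + 1)) (2 * a - 3)).
  2:{ intros i Hi; cbv beta.
      rewrite neg1_pow_upper_half, node_upper_half, fm_node by lia.
      rewrite S_INR; cbn [pow]; pose proof (pos_INR i).
      destruct (neg1_pow_cases i) as [E | E]; rewrite E; field; lra. }
  rewrite (sum_eq _ (fun _ => 0) (m - S (8 * a * a) - S (2 * a - 3))).
  2:{ intros i _; cbv beta.
      rewrite node_upper_half, fm_node_tail by lia; unfold Rdiv; ring. }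
  rewrite sum_cte; ring.
Qed.

Lemma inv_not_node : ~ is_node m (1 / M).
Proof.
  pose proof INR_16_sq_pos as HM.
  intros [k [_ Hk]]; unfold node in Hk.
  assert (Hk' : 2 * INR k = M + 1).
  { apply (Rmult_eq_compat_r M) in Hk; field_simplify in Hk; lra. }
  assert (Hnat : (2 * k = 16 * a * a + 1)%nat).
  { apply INR_eq; rewrite plus_INR, mult_INR, INR_1; simpl (INR 2); lra. }
  lia.
Qed.

Lemma B_fm_at_inv_ge : ln M / (16 * M) <= B m (fm m) (1 / M).
Proof.
  pose proof INR_16_sq_pos as HM.
  unfold B; destruct (excluded_middle_informative _) as [H | _];
    [exfalso; exact (inv_not_node H)|].
  rewrite Nn_fm_at_inv.
  pose proof (sum_inv_odd_ge_half_ln (2 * a - 3)) as HN.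
  replace (INR (2 * a - 3) + 2) with (2 * INR a - 1) in HN
    by (rewrite minus_INR, mult_INR by lia; simpl; ring).
  destruct Dn_at_inv_bounds as [HD0 HD].
  set (N := sum_f_R0 _ _) in *; set (D := Dn _ _) in *.
  assert (HL : 0 <= ln (2 * INR a - 1)) by (rewrite <- ln_1; apply ln_le; lra).
  (* [M = 16 a^2 <= (2a - 1)^4] as soon as [a >= 2]. *)
  assert (HlnM : ln M <= 4 * ln (2 * INR a - 1)).
  { replace 4 with (INR 4) by (simpl; ring); rewrite <- ln_pow by lra.
    apply ln_le; [lra|]; rewrite INR_16_sq; simpl; nra. }
  assert (HND : N / (2 * M) <= N / D).
  { apply Rmult_le_compat_l; [lra|]; apply Rinv_le_contravar; lra. }
  replace (ln M / (16 * M)) with (ln M / 8 / (2 * M)) by (field; lra).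
  apply Rle_trans with (N / (2 * M)); [|exact HND].
  apply Rdiv_le_div_r_iff; lra.
Qed.

End Square.

Lemma pow2_pow2_eq_16_sq j : (3 <= j)%nat -> exists a, (2 <= a)%nat /\ (2 ^ (2 ^ j) = 16 * a * a)%nat.
Proof.
  intros Hj; destruct j as [|j]; [lia|].
  assert (H4 : (4 <= 2 ^ j)%nat) by (change 4%nat with (2 ^ 2)%nat; apply Nat.pow_le_mono_r; lia).
  exists (2 ^ (2 ^ j - 2))%nat; split.
  - change 2%nat with (2 ^ 1)%nat at 1; apply Nat.pow_le_mono_r; lia.
  - rewrite Nat.pow_succ_r'.
    replace (2 * 2 ^ j)%nat with (4 + (2 ^ j - 2 + (2 ^ j - 2)))%nat by lia.
    rewrite !Nat.pow_add_r; simpl; ring.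
Qed.

Theorem lemma2 : forall j : nat, (100 <= j)%nat ->
  fm (2 ^ (2 ^ j)) (1 / INR (2 ^ (2 ^ j))) = 0 /\
  B (2 ^ (2 ^ j)) (fm (2 ^ (2 ^ j))) (1 / INR (2 ^ (2 ^ j)))
    >= ln (INR (2 ^ (2 ^ j))) / (16 * INR (2 ^ (2 ^ j))).
Proof.
  intros j Hj.
  destruct (pow2_pow2_eq_16_sq j ltac:(lia)) as [a [Ha ->]].
  split; [apply fm_at_inv | apply Rle_ge, B_fm_at_inv_ge]; exact Ha.
Qed.
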